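(* Let $n,m\ge1$, $r>0$, let $\varphi_1,\dots,\varphi_n:\mathbb{R}\to[0,\infty)$ be nonnegative functions and $x_1,\dots,x_m\in\mathbb{R}$ such that for each $j$ there is $i$ with $\varphi_i(x_j)>0$. Set $v^1_i=\sqrt{r/n}$ for $i=1,\dots,n$. For $k\ge1$, given $v^k\in[0,\infty)^n$, let $u^k\in[0,\infty)^n$ with $\sum_i(u^k_i)^2=r$ be a point at which $\widehat l^{\,k}(u)=\prod_{j=1}^m\big(\sum_{i=1}^n u_iv^k_i\varphi_i(x_j)\big)$ attains its maximum over the sphere $\{u\in\mathbb{R}^n:\sum_iu_i^2=r\}$; let $\overline\theta^{k+1}>0$ satisfy $(\overline\theta^{k+1})^2\sum_i u^k_iv^k_i=r$ and set $v^{k+1}_i=\overline\theta^{k+1}\sqrt{u^k_iv^k_i}$. Let $P^k=\sum_{i=1}^n u^k_iv^k_i$. Then $\lim_{k\to\infty}P^k=r$; in particular, for every $\varepsilon>0$ there is $k$ with $P^k+\varepsilon\ge r$, so the procedure that stops at the first $k$ with $\sum_i u^k_iv^k_i+\varepsilon\ge r$ terminates after finitely many steps. *)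

From HB Require Import structures.
From mathcomp Require Import all_boot all_order all_algebra.
From mathcomp Require Import all_classical all_reals.
From mathcomp Require Import all_analysis.
Set Implicit Arguments. Unset Strict Implicit. Unset Printing Implicit Defensive.
Import Order.TTheory GRing.Theory Num.Theory.
Local Open Scope ring_scope.

Definition lhat (R : realType) (n m : nat) (phi : 'I_n -> R -> R) (x : 'I_m -> R)
  (v : 'I_n -> R) (u : 'I_n -> R) : R :=
  \prod_(j < m) \sum_(i < n) u i * v i * phi i (x j).

Definition on_sphere (R : realType) (n : nat) (r : R) (u : 'I_n -> R) : Prop :=
  \sum_(i < n) u i ^+ 2 = r.

From HB Require Import structures.
From mathcomp Require Import all_boot all_order all_algebra.
From mathcomp Require Import all_classical all_reals.
From mathcomp Require Import all_analysis.
From mathcomp Require Import lra.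
Set Implicit Arguments. Unset Strict Implicit. Unset Printing Implicit Defensive.
Import Order.TTheory GRing.Theory Num.Theory numFieldNormedType.Exports.
Local Open Scope classical_set_scope.
Local Open Scope ring_scope.

(* Write P_k and M_k for the inner product and the maximal likelihood at step k.
   Since v^{k+1} lies on the sphere, it is a competitor for u^{k+1}; as
   (v^{k+1}_i)^2 = (r / P_k) u^k_i v^k_i, this gives M_{k+1} >= (r / P_k)^m M_k.
   By Cauchy-Schwarz P_k <= r, so M is nondecreasing; it is also bounded, hence
   M_{k+1} - M_k --> 0, and r - P_k <= (r / M_1) (M_{k+1} - M_k) forces P_k --> r. *)

Lemma sphere_dot_le (R : realType) (n : nat) (r : R) (u v : 'I_n -> R) :
  on_sphere r u -> on_sphere r v -> \sum_(i < n) u i * v i <= r.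
Proof.
rewrite /on_sphere => usph vsph.
have amgm : \sum_(i < n) (u i * v i) *+ 2 <= \sum_(i < n) (u i ^+ 2 + v i ^+ 2).
  by apply: ler_sum => i _; rewrite -subr_ge0 addrAC -sqrrB sqr_ge0.
by move: amgm; rewrite sumrMnl big_split /= usph vsph mulr2n; lra.
Qed.

Section LikelihoodProduct.
Variables (R : realType) (n m : nat) (phi : 'I_n -> R -> R) (x : 'I_m -> R).
Hypothesis phi_ge0 : forall i t, 0 <= phi i t.

Lemma lhat_ge0 (v u : 'I_n -> R) :
  (forall i, 0 <= u i * v i) -> 0 <= lhat phi x v u.
Proof.
move=> uv_ge0; apply: prodr_ge0 => j _; apply: sumr_ge0 => i _.
by rewrite mulr_ge0 ?uv_ge0 ?phi_ge0.
Qed.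

Lemma lhat_gt0 (v u : 'I_n -> R) :
  (forall j : 'I_m, exists i : 'I_n, 0 < phi i (x j)) ->
  (forall i, 0 < u i * v i) -> 0 < lhat phi x v u.
Proof.
move=> phi_cover uv_gt0; apply: prodr_gt0 => j _.
have [i phi_i_gt0] := phi_cover j.
rewrite (bigD1 i) //=; apply: ltr_wpDr; last by rewrite mulr_gt0 ?uv_gt0.
by apply: sumr_ge0 => l _; rewrite mulr_ge0 ?phi_ge0 // ltW.
Qed.

Lemma lhat_le (v u : 'I_n -> R) :
  (forall i, 0 <= u i * v i) ->
  lhat phi x v u
    <= (\sum_(i < n) u i * v i) ^+ m * \prod_(j < m) \sum_(i < n) phi i (x j).
Proof.
move=> uv_ge0; rewrite -[m in _ ^+ m](card_ord m) -prodr_const -big_split /=.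
apply: ler_prod => j _; rewrite sumr_ge0 => [|i _]; last by rewrite mulr_ge0.
rewrite mulr_suml; apply: ler_sum => i _; apply: ler_wpM2l => //.
by rewrite (bigD1 i) //= lerDl sumr_ge0.
Qed.

Lemma lhat_scale (v u v' u' : 'I_n -> R) (c : R) :
  (forall i, u' i * v' i = c * (u i * v i)) ->
  lhat phi x v' u' = c ^+ m * lhat phi x v u.
Proof.
move=> uv'E; rewrite -[m in _ ^+ m](card_ord m) -prodr_const -big_split /=.
apply: eq_bigr => j _; rewrite mulr_sumr; apply: eq_bigr => i _.
by rewrite uv'E !mulrA.
Qed.

End LikelihoodProduct.

Section RatioGrowth.
Variables (R : realType) (r : R) (P M : nat -> R).
Hypotheses (r_gt0 : 0 < r) (P_gt0 : forall k, 0 < P k) (P_le : forall k, P k <= r).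
Hypotheses (M0_gt0 : 0 < M 0%N) (M_ub : has_ubound (range M)).
Hypothesis M_growth : forall k, r / P k * M k <= M k.+1.

Let ratio_ge1 k : 1 <= r / P k.
Proof. by rewrite ler_pdivlMr // mul1r. Qed.

Lemma ratio_growth_gt0 k : 0 < M k.
Proof.
elim: k => // k IHk; apply: lt_le_trans (M_growth k).
by rewrite mulr_gt0 ?divr_gt0.
Qed.

Lemma ratio_growth_nondecreasing : {homo M : k l / (k <= l)%N >-> k <= l}.
Proof.
apply/nondecreasing_seqP => k; apply: le_trans (M_growth k).
by rewrite ler_peMl // ltW // ratio_growth_gt0.
Qed.

Lemma ratio_growth_increments_cvg0 : (fun k => M k.+1 - M k) @ \oo --> 0.
Proof.
have M_cvg := nondecreasing_cvgn ratio_growth_nondecreasing M_ub.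
rewrite -(subrr (sup (range M))); apply: cvgB => //.
by rewrite (cvg_shiftS M).
Qed.

(* With d := r / P_k - 1 >= 0: r - P_k = d P_k <= d r, and d M_0 <= d M_k <= M_{k+1} - M_k. *)
Lemma ratio_growth_defect_le k : r - P k <= r / M 0%N * (M k.+1 - M k).
Proof.
have d_ge0 : 0 <= r / P k - 1 by rewrite subr_ge0.
have defectE : r - P k = (r / P k - 1) * P k.
  by rewrite mulrBl mul1r divfK ?gt_eqF.
have incr_ge : (r / P k - 1) * M 0%N <= M k.+1 - M k.
  apply: le_trans (_ : (r / P k - 1) * M k <= _).
    by rewrite ler_wpM2l // ratio_growth_nondecreasing.
  by rewrite mulrBl mul1r lerB.
rewrite defectE (le_trans (ler_wpM2l d_ge0 (P_le k))) //.
by rewrite [X in X <= _]mulrC -mulrA ler_pM2l // ler_pdivlMl // mulrC.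
Qed.

Lemma ratio_growth_cvg : P @ \oo --> r.
Proof.
apply: (@squeeze_cvgr _ _ _ _ (fun k => r - r / M 0%N * (M k.+1 - M k)) (fun=> r)).
- apply: nearW => k; rewrite P_le andbT lerBlDr addrC -lerBlDr.
  exact: ratio_growth_defect_le.
- rewrite -[X in _ --> X]subr0 -[X in _ - X](mulr0 (r / M 0%N)).
  apply: cvgB; first exact: cvg_cst.
  by apply: cvgM; [exact: cvg_cst | exact: ratio_growth_increments_cvg0].
- exact: cvg_cst.
Qed.

End RatioGrowth.

Section Iteration.
Variables (R : realType) (n m : nat) (r : R).
Variables (phi : 'I_n -> R -> R) (x : 'I_m -> R) (u v : nat -> 'I_n -> R).
Hypotheses (n_gt0 : (0 < n)%N) (m_gt0 : (0 < m)%N) (r_gt0 : 0 < r).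
Hypothesis phi_ge0 : forall i t, 0 <= phi i t.
Hypothesis phi_cover : forall j : 'I_m, exists i : 'I_n, 0 < phi i (x j).
Hypothesis v1E : forall i, v 1%N i = Num.sqrt (r / n%:R).
Hypothesis u_max : forall k, (1 <= k)%N ->
  (forall i, 0 <= u k i) /\ on_sphere r (u k) /\
  (forall w : 'I_n -> R, on_sphere r w ->
     lhat phi x (v k) w <= lhat phi x (v k) (u k)).
Hypothesis v_next : forall k, (1 <= k)%N ->
  exists theta : R, 0 < theta /\
    theta ^+ 2 * (\sum_(i < n) u k i * v k i) = r /\
    (forall i, v k.+1 i = theta * Num.sqrt (u k i * v k i)).

Let dot k := \sum_(i < n) u k i * v k i.
Let lik k := lhat phi x (v k) (u k).

Let u_ge0 k i : 0 <= u k.+1 i.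
Proof. by case: (@u_max k.+1 isT) => ->. Qed.

Lemma iterate_v_ge0 k i : 0 <= v k.+1 i.
Proof.
elim: k i => [|k IHk] i; first by rewrite v1E sqrtr_ge0.
have [theta [theta_gt0 [_ ->]]] := @v_next k.+1 isT.
by rewrite mulr_ge0 ?sqrtr_ge0 ?ltW.
Qed.

Lemma iterate_dot_gt0 k : 0 < dot k.+1.
Proof.
have [theta [theta_gt0 [thetaE _]]] := @v_next k.+1 isT.
by move: r_gt0; rewrite -thetaE pmulr_rgt0 ?exprn_gt0.
Qed.

Lemma iterate_v_next_sq k i :
  v k.+2 i * v k.+2 i = r / dot k.+1 * (u k.+1 i * v k.+1 i).
Proof.
have [theta [_ [thetaE ->]]] := @v_next k.+1 isT.
rewrite -thetaE mulfK ?gt_eqF ?iterate_dot_gt0 // mulrACA -!expr2.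
by rewrite sqr_sqrtr // mulr_ge0 ?u_ge0 ?iterate_v_ge0.
Qed.

Lemma iterate_v_on_sphere k : on_sphere r (v k.+1).
Proof.
rewrite /on_sphere; case: k => [|k].
  under eq_bigr do rewrite v1E sqr_sqrtr ?divr_ge0 ?ler0n ?ltW //.
  by rewrite sumr_const card_ord -(mulr_natr (r / n%:R)) divfK // pnatr_eq0 -lt0n.
under eq_bigr do rewrite expr2 iterate_v_next_sq.
by rewrite -mulr_sumr divfK ?gt_eqF ?iterate_dot_gt0.
Qed.

Lemma iterate_dot_le k : dot k.+1 <= r.
Proof.
apply: sphere_dot_le (iterate_v_on_sphere k).
by case: (@u_max k.+1 isT) => _ [].
Qed.

(* v^{k+2} lies on the sphere, so it competes with the maximizer u^{k+2}. *)
Lemma iterate_lik_growth k : r / dot k.+1 * lik k.+1 <= lik k.+2.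
Proof.
have [_ [_ u_opt]] := @u_max k.+2 isT.
apply: le_trans (u_opt _ (iterate_v_on_sphere k.+1)).
rewrite (lhat_scale phi x (iterate_v_next_sq k)); apply: ler_wpM2r.
  by apply: lhat_ge0 => // i; rewrite mulr_ge0 ?u_ge0 ?iterate_v_ge0.
by rewrite ler_eXnr // ler_pdivlMr ?iterate_dot_gt0 // mul1r iterate_dot_le.
Qed.

Lemma iterate_lik_bounded : has_ubound (range (fun k => lik k.+1)).
Proof.
exists (r ^+ m * \prod_(j < m) \sum_(i < n) phi i (x j)) => _ [k _ <-].
have uv_ge0 i : 0 <= u k.+1 i * v k.+1 i by rewrite mulr_ge0 ?u_ge0 ?iterate_v_ge0.
apply: le_trans (lhat_le x phi_ge0 uv_ge0) _.
apply: ler_wpM2r; first by apply: prodr_ge0 => j _; apply: sumr_ge0.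
by rewrite lerXn2r ?nnegrE ?sumr_ge0 ?iterate_dot_le ?ltW.
Qed.

Lemma iterate_lik1_gt0 : 0 < lik 1%N.
Proof.
have [_ [_ u_opt]] := @u_max 1%N isT.
apply: lt_le_trans (u_opt _ (iterate_v_on_sphere 0)).
apply: lhat_gt0 => // i; rewrite v1E -expr2 sqr_sqrtr ?divr_ge0 ?ler0n ?ltW //.
by rewrite divr_gt0 ?ltr0n.
Qed.

Lemma iterate_dot_cvg : dot @ \oo --> r.
Proof.
rewrite -cvg_shiftS; apply: (ratio_growth_cvg r_gt0 (M := fun k => lik k.+1)).
- exact: iterate_dot_gt0.
- exact: iterate_dot_le.
- exact: iterate_lik1_gt0.
- exact: iterate_lik_bounded.
- exact: iterate_lik_growth.
Qed.

End Iteration.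

Theorem lemma7 (R : realType) (n m : nat) (r : R)
  (phi : 'I_n -> R -> R) (x : 'I_m -> R)
  (u v : nat -> 'I_n -> R) :
  (0 < n)%N -> (0 < m)%N -> 0 < r ->
  (forall i t, 0 <= phi i t) ->
  (forall j : 'I_m, exists i : 'I_n, 0 < phi i (x j)) ->
  (forall i, v 1%N i = Num.sqrt (r / n%:R)) ->
  (forall k, (1 <= k)%N ->
     (forall i, 0 <= u k i) /\ on_sphere r (u k) /\
     (forall w : 'I_n -> R, on_sphere r w ->
        lhat phi x (v k) w <= lhat phi x (v k) (u k))) ->
  (forall k, (1 <= k)%N ->
     exists theta : R, 0 < theta /\
       theta ^+ 2 * (\sum_(i < n) u k i * v k i) = r /\
       (forall i, v k.+1 i = theta * Num.sqrt (u k i * v k i))) ->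
  (fun k => \sum_(i < n) u k i * v k i) @ \oo --> r /\
  (forall eps : R, 0 < eps ->
     exists k, (1 <= k)%N /\ r <= \sum_(i < n) u k i * v k i + eps).
Proof.
move=> n_gt0 m_gt0 r_gt0 phi_ge0 phi_cover v1E u_max v_next.
have dot_cvg := iterate_dot_cvg n_gt0 m_gt0 r_gt0 phi_ge0 phi_cover v1E u_max v_next.
split=> // eps eps_gt0.
have [N _ closeN] : \forall k \near \oo, r - eps < \sum_(i < n) u k i * v k i.
  by apply: cvgr_gt dot_cvg _ _; rewrite gtrBl.
exists N.+1; split => //.
by rewrite -lerBlDr; apply/ltW/closeN => /=.
Qed.
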